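(* Assume the setting below and define $$\alpha_{ST}(t)=\max_{0\le i\le N-1}\ \sum_{j=i}^{i+N-1}L_j\,C\left\lceil\frac{t-o_{j,i}}{p}\right\rceil,\qquad t\ge 0.$$ Then for all $s\in\mathbb R$ and $t\ge0$, $C\cdot\Delta t_{ST}(s,s+t)\le\alpha_{ST}(t)$; i.e. $\alpha_{ST}$ is an arrival curve of the credit-frozen part due to ST traffic.
   Context: Fix an output port with physical link rate $C>0$. Its gate control list (GCL) is periodic with period $p>0$ and contains $N\ge 1$ scheduled-traffic (ST) windows per period. Window $k\in\{0,\dots,N-1\}$ is the interval $[o_k,o_k+L_k)$, where $0\le o_0<o_1<\dots<o_{N-1}<p$, $L_k\ge 0$, $o_k+L_k\le o_{k+1}$ for $k<N-1$ and $o_{N-1}+L_{N-1}\le o_0+p$. Indices are extended to all integers periodically: $o_{k+N}=o_k+p$, $L_{k+N}=L_k$. Relative offsets are $o_{j,i}=o_j-o_i$. Let $S=\bigcup_{k\in\mathbb Z}[o_k,o_k+L_k)$ and for $s\le t$ let $\Delta t_{ST}(s,t)$ be the Lebesgue measure of $S\cap[s,t]$. *)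

From HB Require Import structures.
From mathcomp Require Import all_boot all_order all_algebra.
From mathcomp Require Import all_classical all_reals all_analysis.
Set Implicit Arguments. Unset Strict Implicit. Unset Printing Implicit Defensive.
Import Order.TTheory GRing.Theory Num.Theory.
Local Open Scope ring_scope.
Local Open Scope classical_set_scope.

(* Periodic extension of window offsets/lengths to all integers:
   o_{k+N} = o_k + p, L_{k+N} = L_k.  Only o 0..o (N-1), L 0..L (N-1) matter. *)
Definition oext (R : realType) (N : nat) (p : R) (o : nat -> R) (k : int) : R :=
  o `|(k %% N)%Z|%N + ((k %/ N)%Z)%:~R * p.

Definition Lext (R : realType) (N : nat) (L : nat -> R) (k : int) : R :=
  L `|(k %% N)%Z|%N.

Definition ST_set (R : realType) (N : nat) (p : R) (o L : nat -> R) : set R :=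
  \bigcup_(k in [set: int]) [set x : R | oext N p o k <= x < oext N p o k + Lext N L k].

Definition delta_ST (R : realType) (N : nat) (p : R) (o L : nat -> R) (s t : R) : \bar R :=
  lebesgue_measure (ST_set N p o L `&` `[s, t]).

Definition alpha_ST (R : realType) (N : nat) (p C : R) (o L : nat -> R) (t : R) : R :=
  \big[Num.max/0]_(i < N)
    \sum_(i <= j < i + N)
      Lext N L j%:Z * C *
        (Num.ceil ((t - (oext N p o j%:Z - oext N p o i%:Z)) / p))%:~R.

(* The ST windows [o_k, o_k + L_k), k in Z, are the periodic extension of the
   N windows of one GCL period.  They are ordered along the time line: every
   window ends before the next one starts (oext_gap).  The bound
   C * Delta t_ST(s, s + t) <= alpha_ST(t) is proved in two steps.

   For every s there
      is a window k whose start o_k does at least as well as s: if s lies in a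
      gap, slide [s, s + t] forward to the next window start (shift_over_gap);
      if s lies in window k, slide it back to o_k, which loses at most s - o_k
      at the right end but gains the fully busy interval [o_k, s]
      (shift_into_busy).  Both sliding lemmas hold for any measurable set.

   From
      o_k with k = i + qN, window i + j of period q + n starts at
      o_k + o_{i+j,i} + n p, so only the periods n < ceil((t - o_{i+j,i}) / p)
      contribute (one more period can only touch the right end point), each
      with measure L_{i+j}.  Finite subadditivity of Lebesgue measure gives the
      i-th row of alpha_ST, which is below the maximum (alpha_ST_ge_row). *)

From HB Require Import structures.
From mathcomp Require Import all_boot all_order all_algebra.
From mathcomp Require Import all_classical all_reals all_analysis.
From mathcomp Require Import ring lra zify.
Set Implicit Arguments. Unset Strict Implicit. Unset Printing Implicit Defensive.
Import Order.TTheory GRing.Theory Num.Theory.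
Local Open Scope ring_scope.
Local Open Scope classical_set_scope.

Section SlidingIntervals.
Variable R : realType.
Local Notation mu := (@lebesgue_measure R).

Lemma lebesgue_itv_length (b0 b1 : bool) (x y : R) : x <= y ->
  mu ([set` Interval (BSide b0 x) (BSide b1 y)] : set R) = (y - x)%:E.
Proof.
move=> xy; rewrite lebesgue_measure_itv /=; case: ifPn => [_|]; first by rewrite -EFinB.
rewrite lte_fin -leNgt => yx; have -> : y = x by apply/eqP; rewrite eq_le yx xy.
by rewrite subrr.
Qed.

Lemma shift_over_gap (S : set R) (s b t : R) : measurable S -> s <= b ->
  (forall x : R, S x -> s <= x -> b <= x) ->
  (mu (S `&` `[s, (s + t)%R]) <= mu (S `&` `[b, (b + t)%R]))%E.
Proof.
move=> mS sb gap; apply: le_measure; rewrite ?inE; [exact: measurableI | exact: measurableI |].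
move=> x [Sx]; rewrite /= in_itv /= => /andP[sx xst]; split => //.
by rewrite in_itv /= gap //=; lra.
Qed.

(* If [a, s] is contained in S, moving the window back from s to a gains
   s - a on the left, which compensates what is lost on the right. *)
Lemma shift_into_busy (S : set R) (a s t : R) : measurable S -> 0 <= t -> a <= s ->
  `[a, s] `<=` S -> (mu (S `&` `[s, (s + t)%R]) <= mu (S `&` `[a, (a + t)%R]))%E.
Proof.
move=> mS t0 le_as busy.
have mSI u v : measurable (S `&` `[u, v]) by exact: measurableI.
have [short|long] := leP t (s - a).
  have inS : `[a, a + t] `<=` S.
    by apply: subset_trans busy => x; rewrite /= !in_itv /= => /andP[-> ?]; lra.
  rewrite (setIidr inS) lebesgue_itv_length ?lerDl //.
  apply: (@le_trans _ _ (mu `[s, (s + t)%R])).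
    by apply: le_measure; rewrite ?inE; [exact: mSI | exact: measurable_itv | exact: subIsetr].
  by rewrite lebesgue_itv_length ?lerDl // [s + t]addrC [a + t]addrC !addrK.
have mtail : measurable (S `&` `[s, (a + t)%R]) by exact: mSI.
have split_right :
    S `&` `[s, (s + t)%R] `<=` (S `&` `[s, (a + t)%R]) `|` `](a + t)%R, (s + t)%R].
  move=> x [Sx]; rewrite /= in_itv /= => /andP[sx xst].
  have [xat|xat] := leP x (a + t).
    by left; split; rewrite //= in_itv /= sx.
  by right; rewrite /= in_itv /= xat.
have join_left : `[a, s[ `|` (S `&` `[s, (a + t)%R]) `<=` S `&` `[a, (a + t)%R].
  move=> x [|[Sx]]; rewrite /= in_itv /= => /andP[ax xs].
    split; first by apply: busy; rewrite /= in_itv /= ax ltW.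
    by rewrite /= in_itv /= ax /=; lra.
  by split; rewrite //= in_itv /= xs andbT; lra.
have disj : `[a, s[ `&` (S `&` `[s, (a + t)%R]) = set0.
  apply/seteqP; split => // x [] /=; rewrite in_itv /= => /andP[_ xs] [_] /=.
  by rewrite in_itv /=; lra.
have mgap : measurable `](a + t)%R, (s + t)%R] by exact: measurable_itv.
have mhead : measurable `[a, s[ by exact: measurable_itv.
apply: (@le_trans _ _ (mu ((S `&` `[s, (a + t)%R]) `|` `](a + t)%R, (s + t)%R]))).
  by apply: le_measure; rewrite ?inE; [exact: mSI | exact: measurableU | exact: split_right].
apply: le_trans (measureU2 mu mtail mgap) _.
apply: (@le_trans _ _ (mu (`[a, s[ `|` (S `&` `[s, (a + t)%R])))); last first.
  by apply: le_measure; rewrite ?inE; [exact: measurableU | exact: mSI | exact: join_left].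
rewrite measureU //= !lebesgue_itv_length ?lerD2r // addeC.
by have -> : s + t - (a + t) = s - a by ring.
Qed.

End SlidingIntervals.

Section PeriodicExtension.
Variables (R : realType) (N : nat) (p : R) (o L : nat -> R).
Hypothesis N_gt0 : (0 < N)%N.
Local Notation oe := (oext N p o).
Local Notation Le := (Lext N L).

Lemma N_neq0 : N%:Z != 0. Proof. by rewrite eqz_nat -lt0n. Qed.

Lemma int_decomp (k : int) : exists r q, (r < N)%N /\ k = r%:Z + q * N%:Z.
Proof.
exists `|(k %% N)%Z|%N, (k %/ N)%Z; split.
  by rewrite -ltz_nat gez0_abs ?modz_ge0 ?N_neq0 // ltz_pmod.
by rewrite gez0_abs ?modz_ge0 ?N_neq0 // addrC -divz_eq.
Qed.

Lemma oext_rep (r : nat) (q : int) : (r < N)%N -> oe (r%:Z + q * N%:Z) = o r + q%:~R * p.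
Proof.
move=> rN; rewrite /oext [r%:Z + _]addrC modzMDl divzMDl ?N_neq0 // modz_nat modn_small //.
by rewrite divz_small ?addr0 // lez_nat ltz_nat /= absz_nat.
Qed.

Lemma Lext_rep (r : nat) (q : int) : (r < N)%N -> Le (r%:Z + q * N%:Z) = L r.
Proof. by move=> rN; rewrite /Lext [r%:Z + _]addrC modzMDl modz_nat modn_small. Qed.

Lemma oext_shift (k m : int) : oe (k + m * N%:Z) = oe k + m%:~R * p.
Proof.
have [r [q [rN ->]]] := int_decomp k.
by rewrite -addrA -mulrDl !oext_rep // rmorphD mulrDl addrA.
Qed.

Lemma Lext_shift (k m : int) : Le (k + m * N%:Z) = Le k.
Proof. by have [r [q [rN ->]]] := int_decomp k; rewrite -addrA -mulrDl !Lext_rep. Qed.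

End PeriodicExtension.

Section STWindows.
Variables (R : realType) (p : R) (N : nat) (o L : nat -> R).
Hypotheses (hp : 0 < p) (hN : (1 <= N)%N) (ho0 : 0 <= o 0%N)
  (hoinc : forall k : nat, (k.+1 < N)%N -> o k < o k.+1)
  (holast : o N.-1 < p)
  (hL : forall k : nat, (k < N)%N -> 0 <= L k)
  (hdisj : forall k : nat, (k.+1 < N)%N -> o k + L k <= o k.+1)
  (hwrap : o N.-1 + L N.-1 <= o 0%N + p).
Local Notation oe := (oext N p o).
Local Notation Le := (Lext N L).

Lemma Lext_ge0 (k : int) : 0 <= Le k.
Proof. by have [r [q [rN ->]]] := int_decomp hN k; rewrite Lext_rep // hL. Qed.

Lemma oext_step (k : int) : oe k + Le k <= oe (k + 1) /\ oe k < oe (k + 1).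
Proof.
have [r [q [rN ->]]] := int_decomp hN k; rewrite oext_rep // Lext_rep //.
have [rN'|] := ltnP r.+1 N.
  have -> : r%:Z + q * N%:Z + 1 = r.+1%:Z + q * N%:Z by lia.
  by rewrite oext_rep //; split; [have := hdisj rN' | have := hoinc rN']; lra.
move=> Nr; have rE : r = N.-1 by lia.
have -> : r%:Z + q * N%:Z + 1 = 0%N%:Z + (q + 1) * N%:Z by lia.
rewrite oext_rep // rmorphD /= mulrDl mul1r rE.
by move: hwrap holast ho0; split; lra.
Qed.

Lemma oext_gap (k k' : int) : k < k' -> oe k + Le k <= oe k' /\ oe k < oe k'.
Proof.
move=> kk'; have [m ->] : exists m : nat, k' = k + (m.+1)%:Z.
  by exists `|(k' - (k + 1))%R|%N; lia.
elim: m => [|m [IHend IHlt]]; first exact: oext_step.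
have [stepend steplt] := oext_step (k + (m.+1)%:Z).
have -> : k + (m.+2)%:Z = k + (m.+1)%:Z + 1 by lia.
by split; [exact: le_trans IHend (ltW steplt) | exact: lt_trans IHlt steplt].
Qed.

Lemma oext_le (k k' : int) : k <= k' -> oe k <= oe k'.
Proof. by rewrite le_eqVlt => /predU1P[-> // | /oext_gap [_ /ltW]]. Qed.

Lemma window_end_le (k k' : int) : k <= k' -> oe k + Le k <= oe k' + Le k'.
Proof.
rewrite le_eqVlt => /predU1P[-> // | /oext_gap [end_le _]].
by rewrite (le_trans end_le) // lerDl Lext_ge0.
Qed.

Lemma oext_offset (i j : nat) : (j < N)%N -> 0 <= oe (i + j)%N%:Z - oe i%:Z < p.
Proof.
move=> jN; rewrite subr_ge0 oext_le ?lez_nat ?leq_addr //=.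
have lt_next : oe (i + j)%N%:Z < oe (i%:Z + 1 * N%:Z) by apply: (oext_gap _).2; lia.
by rewrite oext_shift // mul1r in lt_next; lra.
Qed.

Local Notation mu := (@lebesgue_measure R).
Local Notation S := (ST_set N p o L).

Definition window (k : int) : set R := [set x | oe k <= x < oe k + Le k].

Lemma ST_setP (x : R) : S x <-> exists k, window k x.
Proof. by split => [[k _ wx] | [k wx]]; exists k. Qed.

Lemma window_measurable (k : int) : measurable (window k).
Proof. by rewrite /window -set_itvco; exact: measurable_itv. Qed.

Lemma window_measure (k : int) : mu (window k) = (Le k)%:E.
Proof.
by rewrite /window -set_itvco lebesgue_itv_length ?lerDl ?Lext_ge0 // addrC addKr.
Qed.

Lemma ST_set_measurable : measurable S.
Proof. exact: countable_bigcupT_measurable (countableP _) window_measurable. Qed.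

Lemma window_start_before (s : R) : exists k, oe k <= s < oe (k + 1).
Proof.
have oe_mult (z : int) : oe (z * N%:Z) = o 0%N + z%:~R * p.
  by rewrite -[z * _]add0r oext_rep.
set q := Num.floor ((s - o 0%N) / p).
have /andP[q_le lt_q1] := floor_itv ((s - o 0%N) / p).
rewrite -/q ler_pdivlMr // in q_le; rewrite -/q ltr_pdivrMr // in lt_q1.
pose P m := oe (q * N%:Z + m%:Z) <= s.
have P0 : P 0%N by rewrite /P addr0 oe_mult; lra.
have P_le m : P m -> (m <= N)%N.
  rewrite /P leqNgt => Pm; apply/negP => Nm.
  have le_oe : oe ((q + 1) * N%:Z) <= oe (q * N%:Z + m%:Z) by apply: oext_le; lia.
  by move: le_oe Pm; rewrite oe_mult; lra.
have [m Pm m_max] := ex_maxnP (ex_intro P 0%N P0) P_le.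
exists (q * N%:Z + m%:Z); apply/andP; split => //.
rewrite ltNge -addrA -(PoszD m 1); apply/negP => /m_max.
by rewrite addn1 ltnn.
Qed.

Lemma reduce_to_window_start (s t : R) : 0 <= t ->
  exists k, (mu (S `&` `[s, (s + t)%R]) <= mu (S `&` `[oe k, (oe k + t)%R]))%E.
Proof.
move=> t0; have [k /andP[ks sk]] := window_start_before s.
have mS := ST_set_measurable.
have [busy|gap] := ltP s (oe k + Le k).
  exists k; apply: shift_into_busy => // x; rewrite /= in_itv /= => /andP[kx xs].
  by apply/ST_setP; exists k; rewrite /window /= kx /=; lra.
exists (k + 1); apply: shift_over_gap => //; first exact: ltW.
move=> x /ST_setP[k' /andP[k'x xk']] sx.
have [k'k|kk'] := leP k' k; first by have := window_end_le k'k; lra.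
by apply: le_trans k'x; apply: oext_le; lia.
Qed.

Section CountFromWindowStart.
Variables (i : nat) (q : int) (t : R).
Hypothesis t0 : 0 <= t.

(* [offset j] is the relative offset o_{i+j,i}; [count j] is
   ceil((t - o_{i+j,i}) / p), the number of periods whose window i + j can
   contribute to [a, a + t]; [piece j n] is the part of window i + j of
   period q + n inside [a, a + t]. *)
Let a := oe (i%:Z + q * N%:Z).
Let offset (j : nat) := oe (i + j)%N%:Z - oe i%:Z.
Let count (j : nat) : nat := absz (Num.ceil ((t - offset j) / p)).
Let piece (j n : nat) := window ((i + j)%N%:Z + (q + n%:Z) * N%:Z) `&` `[a, (a + t)%R].
Let pieces (j : nat) := \big[setU/set0]_(n < (count j).+1) piece j n.

(* [count j] is the ceiling in alpha_ST, which is nonnegative since o_{i+j,i} < p. *)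
Lemma count_ceil (j : nat) : (j < N)%N ->
  (count j)%:R = (Num.ceil ((t - offset j) / p))%:~R :> R.
Proof.
move=> jN; have /andP[_ off_lt] := oext_offset i jN.
rewrite natr_absz ger0_norm // ceil_ge0 ltr_pdivlMr // mulN1r.
by move: t0; rewrite /offset; lra.
Qed.

Lemma oext_piece (j n : nat) :
  oe ((i + j)%N%:Z + (q + n%:Z) * N%:Z) = a + offset j + n%:R * p.
Proof. by rewrite /a /offset !oext_shift // intrD mulrDl; ring. Qed.

Lemma windows_cover : S `&` `[a, (a + t)%R] `<=` \big[setU/set0]_(j < N) pieces j.
Proof.
move=> x [/ST_setP[k /andP[kx xk]]]; rewrite /= in_itv /= => /andP[ax xat].
have [m kE] : exists m : nat, k = i%:Z + q * N%:Z + m%:Z.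
  exists (absz (k - (i%:Z + q * N%:Z))%R); rewrite gez0_abs ?subr_ge0; first by ring.
  rewrite leNgt; apply/negP => /oext_gap[end_le _]; rewrite -/a in end_le; lra.
have {kE}kE : k = (i + m %% N)%N%:Z + (q + (m %/ N)%:Z) * N%:Z.
  by rewrite kE {1}(divn_eq m N) !PoszD PoszM; ring.
have jN : (m %% N < N)%N by rewrite ltn_pmod.
rewrite -bigcup_mkord; exists (m %% N)%N => //.
rewrite /pieces -bigcup_mkord; exists (m %/ N)%N; last first.
  by rewrite /piece -kE; split; [rewrite /window /= kx xk | rewrite /= in_itv /= ax xat].
rewrite /= ltnS -(ler_nat R) count_ceil // (le_trans _ (ceil_ge _)) //.
by rewrite ler_pdivlMr //; move: kx; rewrite kE oext_piece; lra.
Qed.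

(* The window of period q + count j starts at or after a + t. *)
Lemma last_piece_null (j : nat) : (j < N)%N -> mu (piece j (count j)) = 0%E.
Proof.
move=> jN; apply/eqP; rewrite -measure_le0 -(lebesgue_measure_set1 (a + t)).
apply: le_measure; rewrite ?inE; [|exact: measurable_set1|].
  by apply: measurableI; [exact: window_measurable | exact: measurable_itv].
move=> x [/andP[start_x _]]; rewrite /= in_itv /= => /andP[_ xat].
have : t - offset j <= (count j)%:R * p by rewrite -ler_pdivrMr // count_ceil // ceil_ge.
by move: start_x; rewrite oext_piece => ??; apply/eqP; rewrite eq_le xat /=; lra.
Qed.

(* Each of the count j contributing windows i + j has measure L_{i+j}. *)
Lemma measure_from_window_start : (mu (S `&` `[a, (a + t)%R]) <=
  (\sum_(j < N) Le (i + j)%N%:Z * (Num.ceil ((t - offset j) / p))%:~R)%:E)%E.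
Proof.
have mpiece j n : measurable (piece j n).
  by apply: measurableI; [exact: window_measurable | exact: measurable_itv].
have mperiod j : measurable (pieces j).
  by apply: bigsetU_measurable => n _.
have mSa : measurable (S `&` `[a, (a + t)%R]).
  by apply: measurableI; [exact: ST_set_measurable | exact: measurable_itv].
apply: le_trans (content_subadditive mu (fun j _ => mperiod j) mSa windows_cover) _.
rewrite -sumEFin; apply: lee_sum => j _.
apply: le_trans (content_subadditive mu (fun n _ => mpiece j n) (mperiod j) (@subset_refl _ _)) _.
rewrite big_ord_recr /= last_piece_null // adde0 -count_ceil // mulr_natr.
apply: (@le_trans _ _ (\sum_(n < count j) (Le (i + j)%N%:Z)%:E)%E); last first.
  by rewrite sumEFin sumr_const card_ord.
apply: lee_sum => n _; rewrite -(Lext_shift L hN _ (q + n%:Z)) -window_measure.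
by apply: le_measure; rewrite ?inE; [exact: mpiece | exact: window_measurable | exact: subIsetl].
Qed.

End CountFromWindowStart.

End STWindows.

Lemma alpha_ST_ge_row (R : realType) (N : nat) (p C : R) (o L : nat -> R) (t : R)
    (i : nat) : (i < N)%N ->
  C * \sum_(j < N) Lext N L (i + j)%N%:Z *
    (Num.ceil ((t - (oext N p o (i + j)%N%:Z - oext N p o i%:Z)) / p))%:~R
  <= alpha_ST N p C o L t.
Proof.
move=> iN; apply: le_trans (le_bigmax _ _ (Ordinal iN)).
rewrite /= -[X in \sum_(X <= _ < _) _]add0n big_addn addKn big_mkord mulr_sumr.
by apply: ler_sum => j _; rewrite addnC mulrCA mulrA.
Qed.

Theorem lemma1 (R : realType) (C p : R) (N : nat) (o L : nat -> R)
  (hC : 0 < C) (hp : 0 < p) (hN : (1 <= N)%N)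
  (ho0 : 0 <= o 0%N)
  (hoinc : forall k : nat, (k.+1 < N)%N -> o k < o k.+1)
  (holast : o N.-1 < p)
  (hL : forall k : nat, (k < N)%N -> 0 <= L k)
  (hdisj : forall k : nat, (k.+1 < N)%N -> o k + L k <= o k.+1)
  (hwrap : o N.-1 + L N.-1 <= o 0%N + p) :
  forall s t : R, 0 <= t ->
    (C%:E * delta_ST N p o L s (s + t) <= (alpha_ST N p C o L t)%:E)%E.
Proof.
move=> s t t0.
have [k shift_to_start] := reduce_to_window_start hp hN ho0 hoinc holast hL hdisj hwrap s t0.
have [i [q [iN kE]]] := int_decomp hN k; rewrite {}kE in shift_to_start.
have count := measure_from_window_start hp hN ho0 hoinc holast hL hdisj hwrap i q t0.
apply: le_trans (_ : _ <= (C * _)%:E)%E _.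
  by rewrite EFinM lee_pmul2l ?lte_fin //; exact: le_trans shift_to_start count.
by rewrite lee_fin alpha_ST_ge_row.
Qed.
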